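(* Let $E$ be a topological space with (Krull) dimension $\dim E<\infty$. (i) If $\Gamma(x_0,x_n)$ is a presentation for the length of $E$, then $x_0$ is initial in $E$ and $x_n$ is final in $E$. (ii) If $E$ has the $(UIP)$-property, then $l(E)=\dim E$.
   Context: For $x,y$ in a topological space $E$, write $x\rightarrow y$ if $y\in\overline{\{x\}}$, and $x\leftrightarrow y$ if both $x\rightarrow y$ and $y\rightarrow x$. A point $x$ is initial in $E$ if $x\leftrightarrow z$ for every $z\in E$ with $z\rightarrow x$, and final in $E$ if $x\leftrightarrow z$ for every $z\in E$ with $x\rightarrow z$. For $x\rightarrow y$ in $E$, a restrict series of specializations $\Gamma(x,y)$ from $x$ to $y$ is a chain $x=x_0\rightarrow x_1\rightarrow\cdots\rightarrow x_n=y$ in $E$ such that: if $y\rightarrow x$ then $y=x$ (and the chain is trivial); if $y\not\rightarrow x$, then for each $i=0,\dots,n-1$, $x_{i+1}\not\rightarrow x_i$ (i.e. $x_i$ is not a specialization of $x_{i+1}$). Its length is $n$. The length $l(x,y)$ is the supremum of lengths of restrict series from $x$ to $y$, and $l(E)=\sup\{l(x,y): x,y\in E,\ x\rightarrow y\}$. A restrict series in $E$ is a presentation for the length of $E$ if its length equals $l(E)$. $\dim E$ is the supremum of the lengths $n$ of chains $F_0\supsetneq F_1\supsetneq\cdots\supsetneq F_n$ of irreducible closed subsets of $E$. $E$ has the $(UIP)$-property if every irreducible closed subset $U$ of $E$ contains exactly one point $x_U$ initial in $U$ (subspace topology), and $x_U\neq x_V$ for distinct irreducible closed subsets $U\neq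 V$. *)

From HB Require Import structures.
From mathcomp Require Import all_boot all_order.
From mathcomp Require Import all_classical all_reals all_analysis.
Set Implicit Arguments. Unset Strict Implicit. Unset Printing Implicit Defensive.
Local Open Scope classical_set_scope.

Section Defs.
Variable T : topologicalType.

Definition spec (x y : T) : Prop := closure [set x] y.

Definition spec_in (A : set T) (x y : T) : Prop :=
  A x /\ A y /\ @closure (subspace A) [set x] y.

Definition initial_in (A : set T) (x : T) : Prop :=
  A x /\ forall z, A z -> spec_in A z x -> (spec_in A x z /\ spec_in A z x).

Definition final_in (A : set T) (x : T) : Prop :=
  A x /\ forall z, A z -> spec_in A x z -> (spec_in A x z /\ spec_in A z x).

Definition initial (x : T) : Prop := initial_in setT x.
Definition final (x : T) : Prop := final_in setT x.

Definition restrict_series (s : nat -> T) (n : nat) (x y : T) : Prop :=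
  s 0%N = x /\ s n = y /\ (forall i, (i < n)%N -> spec (s i) (s i.+1)) /\
  (spec y x -> y = x /\ n = 0%N) /\
  (~ spec y x -> forall i, (i < n)%N -> ~ spec (s i.+1) (s i)).

(* n is the supremum (in nat, with sup of the empty set = 0) of S *)
Definition is_sup_nat (S : set nat) (n : nat) : Prop :=
  (forall m, S m -> (m <= n)%N) /\
  (forall b, (forall m, S m -> (m <= b)%N) -> (n <= b)%N).

Definition length_pt (x y : T) (l : nat) : Prop :=
  is_sup_nat [set m | exists s, restrict_series s m x y] l.

Definition space_length (l : nat) : Prop :=
  is_sup_nat [set m | exists x y s, spec x y /\ restrict_series s m x y] l.

Definition irreducible_closed (U : set T) : Prop :=
  closed U /\ U !=set0 /\
  forall F G : set T, closed F -> closed G -> U `<=` F `|` G ->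
    U `<=` F \/ U `<=` G.

Definition irr_chain (F : nat -> set T) (n : nat) : Prop :=
  (forall i, (i <= n)%N -> irreducible_closed (F i)) /\
  (forall i, (i < n)%N -> F i.+1 `<=` F i /\ F i.+1 <> F i).

Definition krull_dim (d : nat) : Prop :=
  is_sup_nat [set n | exists F, irr_chain F n] d.

Definition UIP : Prop :=
  (forall U, irreducible_closed U -> exists! x, initial_in U x) /\
  (forall U V xU xV, irreducible_closed U -> irreducible_closed V -> U <> V ->
     initial_in U xU -> initial_in V xV -> xU <> xV).

End Defs.

From mathcomp Require Import all_boot all_order.
From mathcomp Require Import all_classical all_reals all_analysis.

(* (i) A restrict series of maximal length cannot be extended: a point z
   with z -> x_0 but not x_0 -> z could be put in front of it (and dually a
   point after x_n), giving a longer restrict series.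
   (ii) The closures of the points of a restrict series with x_n not -> x_0
   form a strictly decreasing chain of irreducible closed sets, so
   l(E) <= dim E holds in any space. Conversely, under (UIP) every
   irreducible closed set is the closure of its initial point, and the
   initial points of a strict chain of irreducible closed sets form a
   restrict series, so dim E <= l(E). *)

Local Open Scope classical_set_scope.

Lemma is_sup_nat_attained {S : set nat} {n} : is_sup_nat S n -> n = 0 \/ S n.
Proof.
case: n => [|n] [S_le S_lub]; [by left | right].
apply: contrapT => NSn; suff : n.+1 <= n by rewrite ltnn.
apply: S_lub => m Sm; rewrite -ltnS ltn_neqAle S_le // andbT.
by apply/eqP => m_eq; apply: NSn; rewrite -m_eq.
Qed.

Lemma is_sup_nat_max (S : set nat) n :
  (forall m, S m -> m <= n) -> n = 0 \/ S n -> is_sup_nat S n.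
Proof. by move=> S_le Sn; split=> // b S_leb; case: Sn => [->|/S_leb]. Qed.

Section Specialization.
Context {T : topologicalType}.
Implicit Types (x y z : T) (A U : set T) (s : nat -> T) (F : nat -> set T).

Lemma spec_refl x : spec x x.
Proof. exact: subset_closure. Qed.

Lemma closure_set1_sub {A x} : closed A -> A x -> closure [set x] `<=` A.
Proof.
by move=> /closure_id clA Ax; rewrite clA; apply: closureS => _ ->.
Qed.

Lemma spec_closureP x y : spec x y <-> closure [set y] `<=` closure [set x].
Proof.
split=> [xy|]; first exact: closure_set1_sub (@closed_closure _ _) xy.
by apply; apply: spec_refl.
Qed.

Lemma spec_trans {x y z} : spec x y -> spec y z -> spec x z.
Proof. by move=> /spec_closureP; apply. Qed.

Lemma spec_inE A x y : spec_in A x y <-> [/\ A x, A y & spec x y].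
Proof.
rewrite /spec_in; split=> [[Ax [Ay]]|[Ax Ay xy]].
  by rewrite closure_subspaceW => [[]|_ ->].
by do 2!split=> //; rewrite closure_subspaceW => [//|_ ->].
Qed.

Lemma initialP x : initial x <-> forall z, spec z x -> spec x z.
Proof.
split=> [[_ x_init] z zx|x_init].
  by have [/spec_inE[]] := x_init z I ((spec_inE _ _ _).2 (And3 I I zx)).
split=> // z _ /spec_inE[_ _ zx].
by split; apply/spec_inE; split=> //; apply: x_init.
Qed.

Lemma finalP x : final x <-> forall z, spec x z -> spec z x.
Proof.
split=> [[_ x_final] z xz|x_final].
  by have [_ /spec_inE[]] := x_final z I ((spec_inE _ _ _).2 (And3 I I xz)).
split=> // z _ /spec_inE[_ _ xz].
by split; apply/spec_inE; split=> //; apply: x_final.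
Qed.

Lemma closure_set1_irreducible x : irreducible_closed (closure [set x]).
Proof.
split; first exact: closed_closure.
split=> [|A B clA clB /(_ _ (spec_refl x))].
  by exists x; apply: spec_refl.
by case=> [Ax|Bx]; [left|right]; apply: closure_set1_sub.
Qed.

Lemma closure_set1_initial x : initial_in (closure [set x]) x.
Proof.
split=> [|z xz /spec_inE[_ _ zx]]; first exact: spec_refl.
by split; apply/spec_inE; split=> //; apply: spec_refl.
Qed.

Lemma spec_path {s n} : (forall i, i < n -> spec (s i) (s i.+1)) ->
  forall i j, i <= j -> j <= n -> spec (s i) (s j).
Proof.
move=> s_spec i; elim=> [|j IHj].
  by rewrite leqn0 => /eqP-> _; apply: spec_refl.
rewrite leq_eqVlt => /orP[/eqP-> _|ij jn]; first exact: spec_refl.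
exact: spec_trans (IHj ij (ltnW jn)) (s_spec j jn).
Qed.

Lemma restrict_series_spec {s n x y} : restrict_series s n x y -> spec x y.
Proof.
case=> [<- [<- [s_spec _]]].
exact: spec_path s_spec _ _ (leq0n n) (leqnn n).
Qed.

Lemma restrict_series_cons {s n x y z} : restrict_series s n x y ->
  spec z x -> ~ spec x z ->
  restrict_series (fun i => if i is j.+1 then s j else z) n.+1 z y.
Proof.
case=> [s0 [sn [s_spec [yx_trivial yx_strict]]]] zx Nxz.
split=> //; split=> //; split.
  by case=> [_|i lt_in] /=; [rewrite s0 | exact: s_spec].
split=> [yz|_ [_|i lt_in] /=]; last 1 first.
- by apply: yx_strict => // /yx_trivial[_ n0]; rewrite n0 in lt_in.
- have [y_eq_x _] := yx_trivial (spec_trans yz zx).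
  by case: Nxz; rewrite -y_eq_x.
- by rewrite s0.
Qed.

Lemma restrict_series_rcons {s n x y z} : restrict_series s n x y ->
  spec y z -> ~ spec z y ->
  restrict_series (fun i => if i <= n then s i else z) n.+1 x z.
Proof.
move=> rs yz Nzy; have xy := restrict_series_spec rs.
case: rs => [s0 [sn [s_spec [yx_trivial yx_strict]]]].
split=> //; split; first by rewrite ltnn.
split=> [i|].
  rewrite ltnS; case: ltngtP => // [lt_in _|-> _]; last by rewrite sn.
  exact: s_spec.
split=> [zx|_ i]; first by case: Nzy; apply: spec_trans zx xy.
rewrite ltnS; case: ltngtP => // [lt_in _|-> _]; last by rewrite sn.
by apply: yx_strict => // /yx_trivial[_ n0]; rewrite n0 in lt_in.
Qed.

Lemma space_length_ub {l s m x y} :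
  space_length T l -> restrict_series s m x y -> m <= l.
Proof.
move=> [len_ub _] rs; apply: len_ub.
by exists x, y, s; split=> //; apply: restrict_series_spec rs.
Qed.

Lemma restrict_series_initial {s n x y} :
  space_length T n -> restrict_series s n x y -> initial x.
Proof.
move=> len rs; apply/initialP => z zx; apply: contrapT => Nxz.
by have := space_length_ub len (restrict_series_cons rs zx Nxz); rewrite ltnn.
Qed.

Lemma restrict_series_final {s n x y} :
  space_length T n -> restrict_series s n x y -> final y.
Proof.
move=> len rs; apply/finalP => z yz; apply: contrapT => Nzy.
by have := space_length_ub len (restrict_series_rcons rs yz Nzy); rewrite ltnn.
Qed.

Lemma restrict_series_irr_chain {s n x y} : restrict_series s n x y ->
  ~ spec y x -> irr_chain (fun i => closure [set s i]) n.
Proof.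
case=> [_ [_ [s_spec [_ yx_strict]]]] Nyx.
split=> [i _|i lt_in]; first exact: closure_set1_irreducible.
split; first exact/spec_closureP/s_spec.
move=> cl_eq; apply: (yx_strict Nyx i lt_in); apply/spec_closureP.
by rewrite cl_eq.
Qed.

Lemma restrict_series_le_dim {d s m x y} :
  krull_dim T d -> restrict_series s m x y -> m <= d.
Proof.
move=> [dim_ub _] rs; have [_ [_ [_ [yx_trivial _]]]] := rs.
have [/yx_trivial[_ ->] //|Nyx] := pselect (spec y x).
apply: dim_ub; exists (fun i => closure [set s i]).
exact: restrict_series_irr_chain rs Nyx.
Qed.

Lemma irr_chain_closure_series {s n} :
  irr_chain (fun i => closure [set s i]) n -> restrict_series s n (s 0) (s n).
Proof.
move=> [_ cl_strict].
have s_spec i : i < n -> spec (s i) (s i.+1).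
  by move=> lt_in; apply/spec_closureP; case: (cl_strict i lt_in).
have Ns_spec i : i < n -> ~ spec (s i.+1) (s i).
  move=> lt_in /spec_closureP cl_sub.
  have [cl_sub_succ cl_neq] := cl_strict i lt_in.
  by apply: cl_neq; apply/seteqP; split.
do 3!split=> //; split=> [yx|_]; last exact: Ns_spec.
case: (posnP n) => [-> //|n_gt0]; exfalso.
apply: (Ns_spec 0 n_gt0); apply: spec_trans yx.
exact: spec_path s_spec _ _ n_gt0 (leqnn n).
Qed.

Lemma UIP_generic_point {U} : UIP T -> irreducible_closed U ->
  exists x, U = closure [set x].
Proof.
move=> [UIP_ex UIP_inj] irrU; have [x [x_init _]] := UIP_ex U irrU.
exists x; apply: contrapT => U_neq.
have clx_init := closure_set1_initial x.
exact: UIP_inj irrU (closure_set1_irreducible x) U_neq x_init clx_init erefl.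
Qed.

Lemma irr_chain_generic_points {F n} : UIP T -> irr_chain F n ->
  exists s, irr_chain (fun i => closure [set s i]) n.
Proof.
move=> uip [F_irr F_strict].
have [x0 _] := UIP_generic_point uip (F_irr 0 (leq0n n)).
have generic i : exists x, i <= n -> F i = closure [set x].
  have [/F_irr/(UIP_generic_point uip)[x ->]|_] := leqP i n; first by exists x.
  by exists x0.
have [s F_eq] := choice generic.
exists s; split=> [i le_in|i lt_in].
  by rewrite -F_eq //; apply: F_irr.
by rewrite -!F_eq ?(ltnW lt_in) //; apply: F_strict.
Qed.

End Specialization.

Theorem lemma2p1 (T : topologicalType) (d : nat) (hdim : krull_dim T d) :
  (forall (s : nat -> T) (n : nat),
      space_length T n -> restrict_series s n (s 0%N) (s n) ->
      initial (s 0%N) /\ final (s n)) /\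
  (UIP T -> space_length T d).
Proof.
split=> [s n len rs|uip].
  split; [exact: restrict_series_initial rs | exact: restrict_series_final rs].
apply: is_sup_nat_max => [m [x [y [s [_ rs]]]]|].
  exact: restrict_series_le_dim rs.
have [->|[F /(irr_chain_generic_points uip)[s /irr_chain_closure_series rs]]] :=
  is_sup_nat_attained hdim; first by left.
by right; exists (s 0), (s d), s; split=> //; apply: restrict_series_spec rs.
Qed.
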